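(* Suppose Assumptions 1 and 4 hold. Let $\beta_E\in\big(0,\tfrac12\min\{\bar\chi,\tfrac1{2d^*}\}\big)$, $\delta>\frac1{2\beta_E}$, and let $\sigma,\gamma,\tau>0$ be such that $\bar\Phi-\delta I$ is positive semidefinite. Then, with respect to the inner product $\langle u,v\rangle_{\bar\Phi}=u^T\bar\Phi v$: (i) $\bar\Phi^{-1}\bar{\mathfrak A}$ is maximally monotone and $\mathcal T_1=(\mathrm{Id}+\bar\Phi^{-1}\bar{\mathfrak A})^{-1}$ is $\tfrac12$-averaged; (ii) $\bar\Phi^{-1}\bar{\mathfrak B}$ is $\delta\beta_E$-cocoercive and $\mathcal T_2=\mathrm{Id}-\bar\Phi^{-1}\bar{\mathfrak B}$ is $\frac1{2\delta\beta_E}$-averaged; (iii) $\mathcal T=\mathcal T_1\circ\mathcal T_2$ is $\frac{2\delta\beta_E}{4\delta\beta_E-1}$-averaged.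
   Context: Same setting as for the partial-decision operators: players $i=1,\dots,N$, $x_i\in\Omega_i\subseteq\mathbb R^{n_i}$, $\Omega=\prod\Omega_i\subseteq\mathbb R^n$, costs $f_i$ defined and $C^1$ in $x_i$ on $\mathbb R^n$, data $A_i\in\mathbb R^{m\times n_i}$, $b_i\in\mathbb R^m$, $X=\Omega\cap\{\sum A_ix_i=\sum b_i\}$. Assumption 1: each $\Omega_i$ closed convex with nonempty interior; $X$ and each $\{x_i\in\Omega_i:(x_i,x_{-i})\in X\}$ have nonempty relative interior; $f_i$ convex in $x_i$. Graph: connected undirected, $N$ nodes, $M$ arbitrarily oriented edges, incidence $V$ ($V_{il}=1$ if $e_l$ points to $i$, $-1$ if starts at $i$, $0$ else), $L=VV^T$, $d^*=\max_iL_{ii}$; $\mathbf V=V\otimes I_m$, $\mathbf L=L\otimes I_n$, $\mathbf A=\mathrm{diag}(A_i)$, $\mathbf b=\mathrm{col}(b_i)$. $\mathbf x=\mathrm{col}(x^{(1)},\dots,x^{(N)})\in\mathbb R^{Nn}$; $\mathcal R_i=[0_{n_i\times n_{<i}}\ I_{n_i}\ 0_{n_i\times n_{>i}}]$, $\mathcal R=\mathrm{diag}(\mathcal R_i)$; $\mathbf F(\mathbf x)=\mathrm{col}(\nabla_{x_i}f_i(x^{(i)}))_i$. Assumption 4: $\langle\mathbf x-\mathbf x',\mathcal R^T\mathbf F(\mathbf x)-\mathcal R^T\mathbf F(\mathbf x')\rangle\ge\bar\chi\|\mathbf F(\mathbf x)-\mathbf F(\mathbf x')\|^2$ for all $\mathbf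 x,\mathbf x'$, $\bar\chi>0$. $\bar{\mathfrak A}(\mathbf W)=\mathrm{col}(-\mathbf V\mathbf z-\mathbf A\mathcal R\mathbf x,\mathbf V^T\Lambda,\mathcal R^TN_\Omega(\mathcal R\mathbf x)+\mathcal R^T\mathbf A^T\Lambda)$, $\bar{\mathfrak B}(\mathbf W)=\mathrm{col}(\mathbf b,\mathbf 0,\mathcal R^T\mathbf F(\mathbf x)+\mathbf L\mathbf x)$, $\bar\Phi=\begin{pmatrix}\sigma^{-1}I&\mathbf V&\mathbf A\mathcal R\\ \mathbf V^T&\gamma^{-1}I&0\\ \mathcal R^T\mathbf A^T&0&\tau^{-1}I\end{pmatrix}$. $S$ is $\alpha$-averaged if $S=(1-\alpha)\mathrm{Id}+\alpha R$ with $R$ nonexpansive; $\beta$-cocoercive means $\langle u-v,Su-Sv\rangle\ge\beta\|Su-Sv\|^2$. *)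

From HB Require Import structures.
From mathcomp Require Import all_boot.
From Stdlib Require Import Reals Relations.

Set Implicit Arguments.
Unset Strict Implicit.
Unset Printing Implicit Defensive.

HB.instance Definition _ :=
  Monoid.isComLaw.Build R 0%R Rplus
    (fun a b c => Logic.eq_sym (Rplus_assoc a b c)) Rplus_comm Rplus_0_l.

Local Open Scope R_scope.

Definition rsum {T : finType} (F : T -> R) : R := \big[Rplus/0]_(t : T) F t.
Definition dot {T : finType} (u v : T -> R) : R := rsum (fun t => u t * v t).
Definition vnorm {T : finType} (u : T -> R) : R := sqrt (dot u u).
Definition vadd {T : Type} (u v : T -> R) : T -> R := fun t => u t + v t.
Definition vsub {T : Type} (u v : T -> R) : T -> R := fun t => u t - v t.
Definition vscale {T : Type} (a : R) (u : T -> R) : T -> R := fun t => a * u t.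
Definition vzero {T : Type} : T -> R := fun _ => 0.

Definition closed_vset {T : finType} (S : (T -> R) -> Prop) : Prop :=
  forall x, ~ S x -> exists eps, 0 < eps /\ forall y, vnorm (vsub y x) < eps -> ~ S y.
Definition convex_vset {T : finType} (S : (T -> R) -> Prop) : Prop :=
  forall x y t, S x -> S y -> 0 <= t <= 1 ->
    S (vadd (vscale t x) (vscale (1 - t) y)).
Definition has_nonempty_interior {T : finType} (S : (T -> R) -> Prop) : Prop :=
  exists x eps, 0 < eps /\ forall y, vnorm (vsub y x) < eps -> S y.
Definition in_affine_hull {T : finType} (S : (T -> R) -> Prop) (y : T -> R) : Prop :=
  exists l : list (R * (T -> R)),
    List.Forall (fun p => S (snd p)) l /\
    List.fold_right (fun p acc => fst p + acc) 0 l = 1 /\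
    y = List.fold_right (fun p acc => vadd (vscale (fst p) (snd p)) acc) vzero l.
Definition in_rel_interior {T : finType} (S : (T -> R) -> Prop) (x : T -> R) : Prop :=
  S x /\ exists eps, 0 < eps /\
    forall y, in_affine_hull S y -> vnorm (vsub y x) < eps -> S y.
Definition nonempty_rel_interior {T : finType} (S : (T -> R) -> Prop) : Prop :=
  exists x, in_rel_interior S x.
Definition normal_cone {T : finType} (S : (T -> R) -> Prop) (x v : T -> R) : Prop :=
  S x /\ forall y, S y -> dot v (vsub y x) <= 0.

(* index set of R^n, n = sum_i n_i : pairs (i, k) with k < n_i *)
Definition Tn (N : nat) (nd : 'I_N -> nat) : finType := {i : 'I_N & 'I_(nd i)}.
(* R^{Nn} : N copies x^(1..N) of R^n *)
Definition TNn (N : nat) (nd : 'I_N -> nat) : finType := ('I_N * Tn nd)%type.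
Definition TNm (N m : nat) : finType := ('I_N * 'I_m)%type.
Definition TMm (M m : nat) : finType := ('I_M * 'I_m)%type.
(* W = col(Lambda, z, x) in R^{Nm} x R^{Mm} x R^{Nn} *)
Definition TW (N M m : nat) (nd : 'I_N -> nat) : finType :=
  ((TNm N m + TMm M m) + TNn nd)%type.

Section Game.
Variables (N M m : nat) (nd : 'I_N -> nat).

Definition OmegaP (Om : forall i : 'I_N, ('I_(nd i) -> R) -> Prop)
  (y : Tn nd -> R) : Prop :=
  forall i : 'I_N, Om i (fun k => y (existT _ i k)).
Definition Xset (Om : forall i : 'I_N, ('I_(nd i) -> R) -> Prop)
  (Am : forall i : 'I_N, 'I_m -> 'I_(nd i) -> R) (bv : 'I_N -> 'I_m -> R)
  (y : Tn nd -> R) : Prop :=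
  OmegaP Om y /\
  forall r : 'I_m,
    rsum (fun i : 'I_N => rsum (fun k : 'I_(nd i) => Am i r k * y (existT _ i k)))
    = rsum (fun i : 'I_N => bv i r).
(* replace block i of y in R^n by u in R^{n_i} : (u, y_{-i}) *)
Definition upd (y : Tn nd -> R) (i : 'I_N) (u : 'I_(nd i) -> R) : Tn nd -> R :=
  fun t => let: existT j k := t in
    if j == i then oapp u 0 (insub (val k) : option 'I_(nd i)) else y t.
Definition blk (y : Tn nd -> R) (i : 'I_N) : 'I_(nd i) -> R :=
  fun k => y (existT _ i k).

(* graph: edge l goes from src l to dst l *)
Definition Vinc (src dst : 'I_M -> 'I_N) (i : 'I_N) (l : 'I_M) : R :=
  if dst l == i then 1 else if src l == i then -1 else 0.
Definition Lap (src dst : 'I_M -> 'I_N) (i j : 'I_N) : R :=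
  rsum (fun l : 'I_M => Vinc src dst i l * Vinc src dst j l).
Definition dstar (src dst : 'I_M -> 'I_N) : R :=
  \big[Rmax/0]_(i : 'I_N) Lap src dst i i.
Definition adjacent (src dst : 'I_M -> 'I_N) (i j : 'I_N) : Prop :=
  exists l, (src l = i /\ dst l = j) \/ (src l = j /\ dst l = i).
(* connected undirected simple graph (edges arbitrarily oriented) *)
Definition connected_simple_graph (src dst : 'I_M -> 'I_N) : Prop :=
  (0 < N)%nat /\
  (forall l, src l <> dst l) /\
  (forall l l', ((src l = src l' /\ dst l = dst l') \/
                 (src l = dst l' /\ dst l = src l')) -> l = l') /\
  (forall i j, clos_refl_trans _ (adjacent src dst) i j).

(* bold V z, with bold V = V (x) I_m *)
Definition Vz (src dst : 'I_M -> 'I_N) (z : TMm M m -> R) : TNm N m -> R :=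
  fun p => rsum (fun l : 'I_M => Vinc src dst p.1 l * z (l, p.2)).
Definition VTl (src dst : 'I_M -> 'I_N) (lam : TNm N m -> R) : TMm M m -> R :=
  fun p => rsum (fun i : 'I_N => Vinc src dst i p.1 * lam (i, p.2)).
(* R x : R^{Nn} -> R^n, (R x)_i = x^(i)_i *)
Definition Rsel (x : TNn nd -> R) : Tn nd -> R :=
  fun t => x (tag t, t).
Definition RselT (y : Tn nd -> R) : TNn nd -> R :=
  fun p => if tag p.2 == p.1 then y p.2 else 0.
Definition Aop (Am : forall i : 'I_N, 'I_m -> 'I_(nd i) -> R) (y : Tn nd -> R)
  : TNm N m -> R :=
  fun p => rsum (fun k : 'I_(nd p.1) => Am p.1 p.2 k * y (existT _ p.1 k)).
Definition AopT (Am : forall i : 'I_N, 'I_m -> 'I_(nd i) -> R) (lam : TNm N m -> R)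
  : Tn nd -> R :=
  fun t => let: existT i k := t in rsum (fun r : 'I_m => Am i r k * lam (i, r)).
Definition bvec (bv : 'I_N -> 'I_m -> R) : TNm N m -> R := fun p => bv p.1 p.2.
(* bold L x, bold L = L (x) I_n *)
Definition Lx (src dst : 'I_M -> 'I_N) (x : TNn nd -> R) : TNn nd -> R :=
  fun p => rsum (fun j : 'I_N => Lap src dst p.1 j * x (j, p.2)).
Definition Fvec (gradf : forall i : 'I_N, (Tn nd -> R) -> ('I_(nd i) -> R))
  (x : TNn nd -> R) : Tn nd -> R :=
  fun t => let: existT i k := t in gradf i (fun s => x (i, s)) k.

Definition Wl (W : TW M m nd -> R) : TNm N m -> R := fun t => W (inl (inl t)).
Definition Wz (W : TW M m nd -> R) : TMm M m -> R := fun t => W (inl (inr t)).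
Definition Wx (W : TW M m nd -> R) : TNn nd -> R := fun t => W (inr t).
Definition mkW (l : TNm N m -> R) (z : TMm M m -> R) (x : TNn nd -> R)
  : TW M m nd -> R :=
  fun s => match s with
           | inl (inl t) => l t
           | inl (inr t) => z t
           | inr t => x t
           end.

Definition frakA (src dst : 'I_M -> 'I_N)
  (Om : forall i : 'I_N, ('I_(nd i) -> R) -> Prop)
  (Am : forall i : 'I_N, 'I_m -> 'I_(nd i) -> R)
  (W U : TW M m nd -> R) : Prop :=
  exists v : Tn nd -> R,
    normal_cone (OmegaP Om) (Rsel (Wx W)) v /\
    U = mkW (vsub (vscale (-1) (Vz src dst (Wz W))) (Aop Am (Rsel (Wx W))))
            (VTl src dst (Wl W))
            (vadd (RselT v) (RselT (AopT Am (Wl W)))).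
Definition frakB (src dst : 'I_M -> 'I_N)
  (Am : forall i : 'I_N, 'I_m -> 'I_(nd i) -> R) (bv : 'I_N -> 'I_m -> R)
  (gradf : forall i : 'I_N, (Tn nd -> R) -> ('I_(nd i) -> R))
  (W : TW M m nd -> R) : TW M m nd -> R :=
  mkW (bvec bv) vzero (vadd (RselT (Fvec gradf (Wx W))) (Lx src dst (Wx W))).
(* the preconditioning matrix bar Phi, as a linear map *)
Definition PhiApp (src dst : 'I_M -> 'I_N)
  (Am : forall i : 'I_N, 'I_m -> 'I_(nd i) -> R) (sigma gamma tau : R)
  (W : TW M m nd -> R) : TW M m nd -> R :=
  mkW (vadd (vadd (vscale (/ sigma) (Wl W)) (Vz src dst (Wz W))) (Aop Am (Rsel (Wx W))))
      (vadd (VTl src dst (Wl W)) (vscale (/ gamma) (Wz W)))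
      (vadd (RselT (AopT Am (Wl W))) (vscale (/ tau) (Wx W))).

End Game.

Section OpTheory.
Variable T : finType.
Variable P : (T -> R) -> (T -> R).

Definition ipP (u v : T -> R) : R := dot u (P v).
Definition normP (u : T -> R) : R := sqrt (ipP u u).

(* set-valued operator given by its graph *)
Definition monotoneP (G : (T -> R) -> (T -> R) -> Prop) : Prop :=
  forall w u w' u', G w u -> G w' u' -> 0 <= ipP (vsub w w') (vsub u u').
Definition max_monotoneP (G : (T -> R) -> (T -> R) -> Prop) : Prop :=
  monotoneP G /\
  forall w u, (forall w' u', G w' u' -> 0 <= ipP (vsub w w') (vsub u u')) -> G w u.
Definition nonexpansiveP (S : (T -> R) -> (T -> R)) : Prop :=
  forall u v, normP (vsub (S u) (S v)) <= normP (vsub u v).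
Definition averagedP (alpha : R) (S : (T -> R) -> (T -> R)) : Prop :=
  exists Rop, nonexpansiveP Rop /\
    forall w, S w = vadd (vscale (1 - alpha) w) (vscale alpha (Rop w)).
Definition cocoerciveP (beta : R) (S : (T -> R) -> (T -> R)) : Prop :=
  forall u v, beta * (normP (vsub (S u) (S v))) ^ 2 <= ipP (vsub u v) (vsub (S u) (S v)).
End OpTheory.

Definition is_inverse {T : Type} (P Q : (T -> R) -> (T -> R)) : Prop :=
  (forall w, P (Q w) = w) /\ (forall w, Q (P w) = w).

Arguments upd {N nd} y i u _.
Arguments blk {N nd} y i _.

From HB Require Import structures.
From mathcomp Require Import all_boot.
From Stdlib Require Import Reals Lra Psatz FunctionalExtensionality ClassicalEpsilon Classical.
Local Open Scope R_scope.

(* The preconditioner Phi is self-adjoint and delta-strongly positive, so it is invertible and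
   <u, v>_Phi is an inner product. The operator A is monotone for the Euclidean product: the
   coupling terms V z, A R x of the lambda-block reappear transposed, with the opposite sign,
   in the z- and x-blocks and cancel, leaving the monotonicity of the normal cone. Hence
   Phi^-1 A is monotone for <., .>_Phi, and its resolvent is everywhere defined: solving
   W = X + Phi^-1 Y with Y in A(X) is an explicit block computation plus a Euclidean projection
   onto Omega, which exists because a strongly convex quadratic attains its minimum on a
   nonempty closed convex set. Full domain gives maximal monotonicity and firm nonexpansiveness,
   i.e. (i). For (ii), B is betaE-cocoercive for the Euclidean product by Assumption 4 together
   with |L x|^2 <= 2 d* <x, L x>, and Phi >= delta I turns this into (delta betaE)-cocoercivity
   of Phi^-1 B for the Phi-norm. (iii) is the composition rule for a firmly nonexpansive operator
   after the complement of a cocoercive one. *)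

Ltac vext := apply: functional_extensionality; let t := fresh "t" in intro t;
  rewrite /vadd /vsub /vscale /vzero.

Section Sums.
Context {T : finType}.
Implicit Types (F G u v w : T -> R).

Lemma eq_rsum F G : (forall t, F t = G t) -> rsum F = rsum G.
Proof. by move=> H; rewrite /rsum; apply: eq_bigr => t _; exact: H. Qed.

Lemma rsumD F G : rsum (fun t => F t + G t) = rsum F + rsum G.
Proof. by rewrite /rsum big_split. Qed.

Lemma rsumZ a F : rsum (fun t => a * F t) = a * rsum F.
Proof.
rewrite /rsum; apply: (big_ind2 (fun x y => x = a * y)); first by ring.
- by move=> x1 x2 y1 y2 -> ->; ring.
- by [].
Qed.

Lemma rsumB F G : rsum (fun t => F t - G t) = rsum F - rsum G.
Proof.
rewrite (eq_rsum _ (fun t => F t + (-1) * G t)); last by move=> t; ring.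
by rewrite rsumD rsumZ; ring.
Qed.

Lemma rsum0 : rsum (fun _ : T => 0) = 0.
Proof. by rewrite /rsum big1. Qed.

Lemma ler_rsum F G : (forall t, F t <= G t) -> rsum F <= rsum G.
Proof.
move=> H; rewrite /rsum; apply: (big_ind2 (fun x y => x <= y)); first lra.
- by move=> *; lra.
- by move=> t _; apply: H.
Qed.

Lemma rsum_ge0 F : (forall t, 0 <= F t) -> 0 <= rsum F.
Proof. by move=> H; rewrite -rsum0; apply: ler_rsum. Qed.

Lemma rsum_ge_term F t0 : (forall t, 0 <= F t) -> F t0 <= rsum F.
Proof.
move=> H; rewrite /rsum (bigD1 t0) //=.
suff: 0 <= \big[Rplus/0]_(i | i != t0) F i by lra.
apply: (big_ind (fun x => 0 <= x)); first lra.
- by move=> *; lra.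
- by move=> t _; apply: H.
Qed.

Lemma rsum_pred1 (j : T) F : rsum (fun i => if j == i then F i else 0) = F j.
Proof. by rewrite /rsum -big_mkcond (eq_bigl (pred1 j)) ?big_pred1_eq. Qed.

Lemma dot_ge0 u : 0 <= dot u u.
Proof. by apply: rsum_ge0 => t; nra. Qed.

Lemma dotC u v : dot u v = dot v u.
Proof. by apply: eq_rsum => t; ring. Qed.

Lemma dotDl u v w : dot (vadd u v) w = dot u w + dot v w.
Proof. by rewrite /dot -rsumD; apply: eq_rsum => t; rewrite /vadd; ring. Qed.
Lemma dotDr u v w : dot w (vadd u v) = dot w u + dot w v.
Proof. by rewrite /dot -rsumD; apply: eq_rsum => t; rewrite /vadd; ring. Qed.
Lemma dotBl u v w : dot (vsub u v) w = dot u w - dot v w.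
Proof. by rewrite /dot -rsumB; apply: eq_rsum => t; rewrite /vsub; ring. Qed.
Lemma dotBr u v w : dot w (vsub u v) = dot w u - dot w v.
Proof. by rewrite /dot -rsumB; apply: eq_rsum => t; rewrite /vsub; ring. Qed.
Lemma dotZl a u w : dot (vscale a u) w = a * dot u w.
Proof. by rewrite /dot -rsumZ; apply: eq_rsum => t; rewrite /vscale; ring. Qed.
Lemma dotZr a u w : dot w (vscale a u) = a * dot w u.
Proof. by rewrite /dot -rsumZ; apply: eq_rsum => t; rewrite /vscale; ring. Qed.
Lemma dot0r w : dot w vzero = 0.
Proof. by rewrite /dot -rsum0; apply: eq_rsum => t; rewrite /vzero; ring. Qed.

Lemma dot_sub_sqr u v : dot (vsub u v) (vsub u v) = dot u u - 2 * dot u v + dot v v.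
Proof. by rewrite !dotBl !dotBr (dotC v u); ring. Qed.

Lemma sqr_coord_le_dot u t : (u t) ^ 2 <= dot u u.
Proof.
by have := @rsum_ge_term (fun t => u t * u t) t (fun t => ltac:(nra)); rewrite /dot; nra.
Qed.

Lemma dot_eq0 u : dot u u = 0 -> u = vzero.
Proof. by move=> H; vext; have := sqr_coord_le_dot u t; have := pow2_ge_0 (u t); nra. Qed.

Lemma eq_of_dot_sub0 u v : dot (vsub u v) (vsub u v) = 0 -> u = v.
Proof. by move/dot_eq0 => H; vext; have := equal_f H t; rewrite /vsub /vzero; lra. Qed.

Lemma eq_of_dot u v : (forall w, dot w u = dot w v) -> u = v.
Proof. by move=> H; apply: eq_of_dot_sub0; rewrite dotBr H; ring. Qed.

End Sums.

Lemma rsum_sum (A B : finType) (F : (A + B)%type -> R) :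
  rsum F = rsum (fun a => F (inl a)) + rsum (fun b => F (inr b)).
Proof. by rewrite /rsum big_sumType. Qed.

Lemma rsum_pair (A B : finType) (F : (A * B)%type -> R) :
  rsum F = rsum (fun a => rsum (fun b => F (a, b))).
Proof. by rewrite /rsum pair_bigA; apply: eq_bigr => -[a b]. Qed.

Lemma rsum_sig (I : finType) (J : I -> finType) (F : {i : I & J i} -> R) :
  rsum F = rsum (fun i => rsum (fun j => F (existT _ i j))).
Proof.
rewrite /rsum (sig_big_dep xpredT (fun _ => xpredT) (fun i j => F (existT _ i j))).
by apply: eq_bigr => -[i j].
Qed.

Lemma rsum_exchange (A B : finType) (F : A -> B -> R) :
  rsum (fun a => rsum (fun b => F a b)) = rsum (fun b => rsum (fun a => F a b)).
Proof. by rewrite /rsum exchange_big. Qed.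

Lemma rsumZr (A : finType) (F : A -> R) a : rsum F * a = rsum (fun t => F t * a).
Proof. by rewrite Rmult_comm -rsumZ; apply: eq_rsum => t; ring. Qed.

Section SelfAdjoint.
Context {T : finType} {K : (T -> R) -> (T -> R)}.
Hypothesis HKsym : forall u v, dot u (K v) = dot v (K u).

(* Symmetry of the bilinear form (u, v) |-> <u, K v> already forces K to be linear. *)
Lemma self_adjoint_add u v : K (vadd u v) = vadd (K u) (K v).
Proof. by apply: eq_of_dot => w; rewrite HKsym dotDl dotDr !(HKsym _ w). Qed.

Lemma self_adjoint_scale a u : K (vscale a u) = vscale a (K u).
Proof. by apply: eq_of_dot => w; rewrite HKsym dotZl dotZr (HKsym _ w). Qed.

Lemma self_adjoint_sub u v : K (vsub u v) = vsub (K u) (K v).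
Proof. by apply: eq_of_dot => w; rewrite HKsym dotBl dotBr !(HKsym _ w). Qed.

End SelfAdjoint.

Lemma cv_const (a : R) : Un_cv (fun _ => a) a.
Proof. by move=> e He; exists 0%nat => n _; rewrite /Rdist Rminus_diag Rabs_R0. Qed.

Lemma inv_succ_cv : Un_cv (fun n => / (INR n + 1)) 0.
Proof. exact: RinvN_cv. Qed.

Lemma inv_succ_lt (e : R) :
  0 < e -> exists N : nat, forall n, (N <= n)%coq_nat -> / (INR n + 1) < e.
Proof.
move=> He; have [N HN] := inv_succ_cv e He; exists N => n /HN.
by rewrite /Rdist Rminus_0_r Rabs_pos_eq //; apply: Rlt_le; apply: RinvN_pos.
Qed.

Lemma exists_inf_approx (E : R -> Prop) (lb : R) :
  (forall r, E r -> lb <= r) -> (exists r, E r) ->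
  exists d, (forall r, E r -> d <= r) /\
    forall eps, 0 < eps -> exists r, E r /\ r < d + eps.
Proof.
move=> Hlb [r0 Hr0].
have Hb : bound (fun r => E (- r)) by exists (- lb) => r /Hlb; lra.
have Hne : exists x, E (- x) by exists (- r0); rewrite Ropp_involutive.
have [s [Hs1 Hs2]] := completeness _ Hb Hne.
exists (- s); split.
- move=> r Hr; have : - r <= s by apply: Hs1; rewrite Ropp_involutive.
  lra.
- move=> eps Heps; apply: NNPP => Hno.
  suff : s <= s - eps by lra.
  apply: Hs2 => r Hr; apply: Rnot_lt_le => Hlt.
  by apply: Hno; exists (- r); split => //; lra.
Qed.

Section Limits.
Context {T : finType}.

Lemma cv_rsum (g : nat -> T -> R) (l : T -> R) :
  (forall t, Un_cv (fun n => g n t) (l t)) -> Un_cv (fun n => rsum (g n)) (rsum l).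
Proof.
rewrite /rsum => Hg; elim: (index_enum T) => [|a s IH].
  by apply: (Un_cv_ext (fun _ => 0)) => [n|]; rewrite ?big_nil //; apply: cv_const.
apply: (Un_cv_ext (fun n => g n a + \big[Rplus/0]_(t <- s) g n t)) => [n|].
  by rewrite big_cons.
by rewrite big_cons; apply: CV_plus.
Qed.

Lemma cv_dotr (w : T -> R) (u : nat -> T -> R) (y : T -> R) :
  (forall t, Un_cv (fun n => u n t) (y t)) -> Un_cv (fun n => dot w (u n)) (dot w y).
Proof. by move=> Hu; apply: cv_rsum => t; apply: CV_mult; [apply: cv_const | apply: Hu]. Qed.

Lemma dot_cauchy_cv (u : nat -> T -> R) :
  (forall e, 0 < e -> exists N, forall n k, (N <= n)%coq_nat -> (N <= k)%coq_nat ->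
     dot (vsub (u n) (u k)) (vsub (u n) (u k)) < e) ->
  exists y, forall t, Un_cv (fun n => u n t) (y t).
Proof.
move=> Hc.
have Hcoord t : Cauchy_crit (fun n => u n t).
  move=> e He; have [N HN] := Hc (e ^ 2) ltac:(nra).
  exists N => n k Hn Hk; rewrite /Rdist.
  have := sqr_coord_le_dot (vsub (u n) (u k)) t; have := HN n k Hn Hk.
  rewrite /vsub /Rabs; case: Rcase_abs => _; nra.
exists (fun t => proj1_sig (R_complete _ (Hcoord t))) => t.
exact: (proj2_sig (R_complete _ (Hcoord t))).
Qed.

Lemma closed_vset_cv (C : (T -> R) -> Prop) (u : nat -> T -> R) (y : T -> R) :
  closed_vset C -> (forall n, C (u n)) -> (forall t, Un_cv (fun n => u n t) (y t)) -> C y.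
Proof.
move=> HC Hu Hy; apply: NNPP => /HC [eps [Heps Hball]].
have Hd : Un_cv (fun n => dot (vsub (u n) y) (vsub (u n) y)) (dot (vsub y y) (vsub y y)).
  by apply: cv_rsum => t; apply: CV_mult; apply: CV_minus => //; apply: cv_const.
have [N HN] := Hd (eps ^ 2) ltac:(nra).
apply: (Hball (u N)) (Hu N).
have : Rdist (dot (vsub (u N) y) (vsub (u N) y)) (dot (vsub y y) (vsub y y)) < eps ^ 2.
  exact: HN.
have -> : dot (vsub y y) (vsub y y) = 0.
  by rewrite /dot -(rsum0 (T := T)); apply: eq_rsum => t; rewrite /vsub; ring.
rewrite /Rdist Rminus_0_r Rabs_pos_eq; last exact: dot_ge0.
move=> Hlt; rewrite /vnorm -(sqrt_pow2 eps); last lra.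
by apply: sqrt_lt_1_alt; split; [exact: dot_ge0 | exact: Hlt].
Qed.

End Limits.

Section QuadraticMinimization.
Context {T : finType} (K : (T -> R) -> (T -> R)) (c : T -> R) (kappa : R).
Hypothesis Hkappa : 0 < kappa.
Hypothesis HKsym : forall u v, dot u (K v) = dot v (K u).
Hypothesis HKpos : forall u, kappa * dot u u <= dot u (K u).

Definition quad (y : T -> R) := dot y (K y) - 2 * dot c y.

Ltac expand_dot :=
  rewrite ?(self_adjoint_sub HKsym) ?(self_adjoint_add HKsym) ?(self_adjoint_scale HKsym);
  repeat (rewrite dotBl || rewrite dotBr || rewrite dotDl || rewrite dotDr
    || rewrite dotZl || rewrite dotZr).

Lemma quad_midpoint a b : quad a + quad b - 2 * quad (vadd (vscale (/2) a) (vscale (1 - /2) b))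
  = / 2 * dot (vsub a b) (K (vsub a b)).
Proof. by rewrite /quad; expand_dot; rewrite (HKsym a b); field. Qed.

Lemma quad_expand y u : quad u = quad y + 2 * dot (vsub (K y) c) (vsub u y)
  + dot (vsub u y) (K (vsub u y)).
Proof.
rewrite /quad; expand_dot.
by rewrite (HKsym y u) (dotC (K y) u) (dotC (K y) y) (dotC c u) (dotC c y); ring.
Qed.

Lemma quad_lb y : - dot c c / kappa <= quad y.
Proof.
have H1 := HKpos y; have := dot_ge0 (vsub (vscale kappa y) c).
expand_dot; rewrite (dotC y c) /quad => H2.
apply: (Rmult_le_reg_l kappa) => //.
have -> : kappa * (- dot c c / kappa) = - dot c c by field; lra.
nra.
Qed.

Lemma quad_argmin (C : (T -> R) -> Prop) :
  closed_vset C -> convex_vset C -> (exists y, C y) ->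
  exists y, C y /\ forall y', C y' -> quad y <= quad y'.
Proof.
move=> HC_closed HC_convex HC_ne.
have [d [Hd Happrox]] := exists_inf_approx (fun r => exists y, C y /\ r = quad y)
  (- dot c c / kappa) ltac:(by move=> r [y [_ ->]]; apply: quad_lb)
  ltac:(by case: HC_ne => y Hy; exists (quad y), y).
have Hqd y : C y -> d <= quad y by move=> Hy; apply: Hd; exists y.
have Hseq n : exists y, C y /\ quad y < d + / (INR n + 1).
  have [r [[y [Hy ->]] Hr]] := Happrox _ (RinvN_pos n); by exists y.
pose u n := proj1_sig (constructive_indefinite_description _ (Hseq n)).
have Hu n : C (u n) /\ quad (u n) < d + / (INR n + 1).
  exact: (proj2_sig (constructive_indefinite_description _ (Hseq n))).
have Hcauchy e : 0 < e -> exists N, forall n k, (N <= n)%coq_nat -> (N <= k)%coq_nat ->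
    dot (vsub (u n) (u k)) (vsub (u n) (u k)) < e.
  move=> He; have [N HN] := inv_succ_lt (kappa * e / 4) ltac:(nra).
  exists N => n k Hn Hk.
  have [Cn qn] := Hu n; have [Ck qk] := Hu k.
  have := HN n Hn; have := HN k Hk.
  have := Hqd _ (HC_convex (u n) (u k) (/ 2) Cn Ck ltac:(lra)).
  have := quad_midpoint (u n) (u k); have := HKpos (vsub (u n) (u k)).
  move=> *; apply: (Rmult_lt_reg_l kappa) => //; nra.
have [y Hy] := dot_cauchy_cv u Hcauchy.
have HyC : C y := closed_vset_cv C u y HC_closed (fun n => proj1 (Hu n)) Hy.
exists y; split => // y' /Hqd; apply: Rle_trans.
set g := vsub (K y) c.
have Hlim : quad y + 2 * dot g (vsub y y) <= d + 0.
  apply: (@Rle_cv_lim (fun n => quad y + 2 * dot g (vsub (u n) y))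
                     (fun n => d + / (INR n + 1))).
  - move=> n; have := quad_expand y (u n); have := Hu n.
    have := HKpos (vsub (u n) y); have := dot_ge0 (vsub (u n) y); rewrite -/g; nra.
  - apply: CV_plus; first exact: cv_const.
    apply: CV_mult; first exact: cv_const.
    by apply: cv_dotr => t; apply: CV_minus => //; apply: cv_const.
  - by apply: CV_plus; [apply: cv_const | apply: inv_succ_cv].
by move: Hlim; rewrite dotBr; lra.
Qed.

Lemma quad_min_vi (C : (T -> R) -> Prop) :
  closed_vset C -> convex_vset C -> (exists y, C y) ->
  exists y, C y /\ forall y', C y' -> 0 <= dot (vsub (K y) c) (vsub y' y).
Proof.
move=> HC_closed HC_convex HC_ne.
have [y [HyC Hmin]] := quad_argmin C HC_closed HC_convex HC_ne.
exists y; split => // y' Hy'; apply: Rnot_lt_le => HG.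
set g := vsub (K y) c in HG.
set G := dot g (vsub y' y) in HG.
set H := dot (vsub y' y) (K (vsub y' y)).
have HH : 0 <= H.
  by have := HKpos (vsub y' y); have := dot_ge0 (vsub y' y); rewrite /H; nra.
set t := - G / (H - G).
have Ht : 0 < t <= 1.
  rewrite /t; split; first by apply: Rdiv_lt_0_compat; lra.
  apply: (Rmult_le_reg_r (H - G)); first lra.
  have -> : - G / (H - G) * (H - G) = - G by field; lra.
  lra.
pose z := vadd (vscale t y') (vscale (1 - t) y).
have Hz := Hmin z (HC_convex y' y t Hy' HyC (conj (Rlt_le _ _ (proj1 Ht)) (proj2 Ht))).
have Hzy : vsub z y = vscale t (vsub y' y) by rewrite /z; vext; ring.
rewrite (quad_expand y z) Hzy (self_adjoint_scale HKsym) dotZl dotZr -/g -/G in Hz.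
rewrite dotZr -/H in Hz.
have Htt : t * H = t * G - G by rewrite /t; field; lra.
have Hneg : t * G * (1 + t) < 0 by nra.
nra.
Qed.

End QuadraticMinimization.

Definition firmly_nonexpansiveP {T : finType} (P : (T -> R) -> (T -> R))
    (S : (T -> R) -> (T -> R)) : Prop :=
  forall u v, ipP P (vsub (S u) (S v)) (vsub (S u) (S v)) <= ipP P (vsub u v) (vsub (S u) (S v)).

Section MetricOperators.
Context {T : finType} {P : (T -> R) -> (T -> R)}.
Hypothesis HPsym : forall u v, dot u (P v) = dot v (P u).
Hypothesis HPpos : forall u, 0 <= dot u (P u).

Local Notation qP u := (ipP P u u).

Lemma qP_sub x y : qP (vsub x y) = qP x - 2 * ipP P x y + qP y.
Proof. by rewrite /ipP (self_adjoint_sub HPsym) dotBl !dotBr (HPsym y x); ring. Qed.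

Lemma qP_add x y : qP (vadd x y) = qP x + 2 * ipP P x y + qP y.
Proof. by rewrite /ipP (self_adjoint_add HPsym) dotDl !dotDr (HPsym y x); ring. Qed.

Lemma ipP_scalel a x y : ipP P (vscale a x) y = a * ipP P x y.
Proof. exact: dotZl. Qed.

Lemma ipP_scaler a x y : ipP P x (vscale a y) = a * ipP P x y.
Proof. by rewrite /ipP (self_adjoint_scale HPsym) dotZr. Qed.

Lemma normP_sqr u : normP P u ^ 2 = qP u.
Proof. by rewrite /normP pow2_sqrt //; apply: HPpos. Qed.

(* The averaged operator is recovered from the nonexpansive one as S = (1 - alpha) Id + alpha R,
   and the inequality below is exactly the nonexpansiveness of R = (S - (1 - alpha) Id) / alpha. *)
Lemma averagedP_of_ineq (alpha : R) (S : (T -> R) -> (T -> R)) :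
  0 < alpha < 1 ->
  (forall u v, qP (vsub (S u) (S v)) + (1 - alpha) / alpha *
     qP (vsub (vsub u v) (vsub (S u) (S v))) <= qP (vsub u v)) ->
  averagedP P alpha S.
Proof.
move=> Ha H.
exists (fun w => vadd (vscale (1 - / alpha) w) (vscale (/ alpha) (S w))); split; last first.
  by move=> w; vext; field; lra.
move=> u v; apply: sqrt_le_1_alt.
have -> : vsub (vadd (vscale (1 - / alpha) u) (vscale (/ alpha) (S u)))
               (vadd (vscale (1 - / alpha) v) (vscale (/ alpha) (S v)))
   = vadd (vscale (1 - / alpha) (vsub u v)) (vscale (/ alpha) (vsub (S u) (S v))).
  by vext; ring.
have := H u v.
rewrite (qP_sub (vsub u v) (vsub (S u) (S v))) qP_add !ipP_scalel !ipP_scaler.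
set X := qP (vsub u v); set Y := qP (vsub (S u) (S v)).
set Z := ipP P (vsub u v) (vsub (S u) (S v)) => H1.
have HX : 0 <= X by apply: HPpos.
have H2 : alpha * Y + (1 - alpha) * (X - 2 * Z + Y) <= alpha * X.
  have -> : alpha * Y + (1 - alpha) * (X - 2 * Z + Y) =
    alpha * (Y + (1 - alpha) / alpha * (X - 2 * Z + Y)) by field; lra.
  apply: Rmult_le_compat_l; lra.
apply: (Rmult_le_reg_l (alpha * alpha)); first nra.
have -> : alpha * alpha * ((1 - / alpha) * ((1 - / alpha) * X) +
   2 * ((1 - / alpha) * (/ alpha * Z)) + / alpha * (/ alpha * Y))
   = (alpha - 1) * (alpha - 1) * X + 2 * (alpha - 1) * Z + Y by field; lra.
nra.
Qed.

Lemma firmly_nonexpansive_averaged {S : (T -> R) -> (T -> R)} :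
  firmly_nonexpansiveP P S -> averagedP P (/ 2) S.
Proof.
move=> H; apply: averagedP_of_ineq; first lra.
move=> u v; rewrite (qP_sub (vsub u v) (vsub (S u) (S v))).
have -> : (1 - / 2) / / 2 = 1 by field.
have := H u v; lra.
Qed.

Lemma cocoercive_sub_averaged {c : R} {C : (T -> R) -> (T -> R)} :
  / 2 < c -> cocoerciveP P c C -> averagedP P (/ (2 * c)) (fun w => vsub w (C w)).
Proof.
move=> Hc H; apply: averagedP_of_ineq.
  split; first by apply: Rinv_0_lt_compat; lra.
  rewrite -Rinv_1; apply: Rinv_lt_contravar; lra.
move=> u v.
have -> : vsub (vsub u (C u)) (vsub v (C v)) = vsub (vsub u v) (vsub (C u) (C v)) by vext; ring.
have -> : vsub (vsub u v) (vsub (vsub u v) (vsub (C u) (C v))) = vsub (C u) (C v) by vext; ring.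
have -> : (1 - / (2 * c)) / / (2 * c) = 2 * c - 1 by field; lra.
have := H u v; rewrite normP_sqr (qP_sub (vsub u v) (vsub (C u) (C v))).
have := HPpos (vsub (C u) (C v)); nra.
Qed.

Lemma qP_add_le (k : R) s t : 0 < k -> k / (1 + k) * qP (vadd s t) <= k * qP s + qP t.
Proof.
move=> Hk; have := HPpos (vsub (vscale k s) t).
rewrite -/(ipP P _ _) qP_sub !ipP_scalel ipP_scaler => H.
rewrite qP_add; apply: (Rmult_le_reg_l (1 + k)); first lra.
have -> : (1 + k) * (k / (1 + k) * (qP s + 2 * ipP P s t + qP t)) =
  k * (qP s + 2 * ipP P s t + qP t) by field; lra.
nra.
Qed.

Lemma comp_averaged {c : R} {C S : (T -> R) -> (T -> R)} :
  / 2 < c -> cocoerciveP P c C -> firmly_nonexpansiveP P S ->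
  averagedP P (2 * c / (4 * c - 1)) (fun w => S (vsub w (C w))).
Proof.
move=> Hc Hco HS; apply: averagedP_of_ineq.
  split; first by apply: Rdiv_lt_0_compat; lra.
  apply: (Rmult_lt_reg_r (4 * c - 1)); first lra.
  have -> : 2 * c / (4 * c - 1) * (4 * c - 1) = 2 * c by field; lra.
  lra.
move=> u v.
set a := vsub u (C u); set b := vsub v (C v); set p := vsub (S a) (S b).
have HSp : qP p + qP (vsub (vsub a b) p) <= qP (vsub a b).
  by rewrite (qP_sub (vsub a b) p); have := HS a b; rewrite -/p; lra.
have Hab : qP (vsub a b) + (2 * c - 1) * qP (vsub (C u) (C v)) <= qP (vsub u v).
  have -> : vsub a b = vsub (vsub u v) (vsub (C u) (C v)) by rewrite /a /b; vext; ring.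
  have := Hco u v; rewrite normP_sqr (qP_sub (vsub u v) (vsub (C u) (C v))).
  have := HPpos (vsub (C u) (C v)); nra.
have Hk := @qP_add_le (2 * c - 1) (vsub (C u) (C v)) (vsub (vsub a b) p) ltac:(lra).
have -> : vsub (vsub u v) p = vadd (vsub (C u) (C v)) (vsub (vsub a b) p).
  by rewrite /a /b; vext; ring.
have -> : (1 - 2 * c / (4 * c - 1)) / (2 * c / (4 * c - 1)) = (2 * c - 1) / (1 + (2 * c - 1)).
  by field; lra.
lra.
Qed.

End MetricOperators.

Section StronglyPositiveMetric.
Context {T : finType} {P : (T -> R) -> (T -> R)} {delta : R}.
Hypothesis Hdelta : 0 < delta.
Hypothesis HPsym : forall u v, dot u (P v) = dot v (P u).
Hypothesis HPstrong : forall u, delta * dot u u <= dot u (P u).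

Lemma strongly_positive_ge0 u : 0 <= dot u (P u).
Proof. by have := HPstrong u; have := dot_ge0 u; nra. Qed.

Lemma strongly_positive_eq u v : dot (vsub u v) (P (vsub u v)) <= 0 -> u = v.
Proof.
move=> H; apply: eq_of_dot_sub0.
by have := HPstrong (vsub u v); have := dot_ge0 (vsub u v); nra.
Qed.

Lemma strongly_positive_inj u v : P u = P v -> u = v.
Proof.
move=> Huv; apply: strongly_positive_eq.
by rewrite (self_adjoint_sub HPsym) Huv dotBr; lra.
Qed.

Lemma strongly_positive_surj c : exists y, P y = c.
Proof.
have [|||y [_ Hy]] := quad_min_vi P c delta Hdelta HPsym HPstrong (fun _ => True).
- by move=> x /(_ I).
- by [].
- by exists vzero.
set g := vsub (P y) c in Hy.
exists y; apply: eq_of_dot_sub0; rewrite -/g.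
have := Hy (vsub y g) I.
have -> : vsub (vsub y g) y = vscale (-1) g by vext; ring.
by rewrite dotZr; have := dot_ge0 g; lra.
Qed.

Lemma strongly_positive_invertible : exists Psi, is_inverse P Psi.
Proof.
pose Psi c := proj1_sig (constructive_indefinite_description _ (strongly_positive_surj c)).
have HPsi c : P (Psi c) = c.
  exact: (proj2_sig (constructive_indefinite_description _ (strongly_positive_surj c))).
by exists Psi; split => // w; apply: strongly_positive_inj; rewrite HPsi.
Qed.

Lemma preconditioned_cocoercive {Psi B : (T -> R) -> (T -> R)} {beta : R} :
  is_inverse P Psi -> 0 < beta ->
  (forall u v, beta * dot (vsub (B u) (B v)) (vsub (B u) (B v))
     <= dot (vsub u v) (vsub (B u) (B v))) ->
  cocoerciveP P (delta * beta) (fun W => Psi (B W)).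
Proof.
move=> [HPsi _] Hbeta HB u v.
rewrite normP_sqr; last exact: strongly_positive_ge0.
have Hh : P (vsub (Psi (B u)) (Psi (B v))) = vsub (B u) (B v).
  by rewrite (self_adjoint_sub HPsym) !HPsi.
set h := vsub (Psi (B u)) (Psi (B v)) in Hh *; set g := vsub (B u) (B v) in Hh *.
rewrite /ipP Hh.
have H1 := HPstrong h; rewrite Hh in H1.
(* delta <h, g> <= <g, g>, from 0 <= |delta h - g|^2 and delta |h|^2 <= <h, g> *)
have H2 := dot_ge0 (vsub (vscale delta h) g).
rewrite dot_sub_sqr !dotZl !dotZr in H2.
have Hhg : delta * dot h g <= dot g g.
  by have := Rmult_le_compat_l _ _ _ (Rlt_le _ _ Hdelta) H1; nra.
have := HB u v; rewrite -/g.
have := Rmult_le_compat_l _ _ _ (Rlt_le _ _ Hbeta) Hhg; nra.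
Qed.

Section Resolvent.
Context {Psi : (T -> R) -> (T -> R)}.
Hypothesis HPsi : is_inverse P Psi.
Context {A : (T -> R) -> (T -> R) -> Prop}.
Hypothesis HAmono : forall X Y X' Y', A X Y -> A X' Y' -> 0 <= dot (vsub X X') (vsub Y Y').
Hypothesis HAres : forall W, exists X Y, A X Y /\ W = vadd X (Psi Y).

Lemma ipP_Psi u Y Y' : ipP P u (vsub (Psi Y) (Psi Y')) = dot u (vsub Y Y').
Proof. by rewrite /ipP (self_adjoint_sub HPsym) !(proj1 HPsi). Qed.

Lemma resolvent_unique X X' Y Y' :
  A X Y -> A X' Y' -> vadd X (Psi Y) = vadd X' (Psi Y') -> X = X'.
Proof.
move=> HA HA' HX; apply: strongly_positive_eq.
have HXX : vsub X X' = vsub (Psi Y') (Psi Y).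
  by vext; have := equal_f HX t; rewrite /vadd; lra.
have := HAmono _ _ _ _ HA HA'.
rewrite HXX (self_adjoint_sub HPsym) !(proj1 HPsi) !dotBr; lra.
Qed.

Lemma exists_resolvent : exists S : ((T -> R) -> (T -> R)),
  (forall W X, (exists Y, A X Y /\ W = vadd X (Psi Y)) <-> X = S W) /\
  firmly_nonexpansiveP P S.
Proof.
pose S W := proj1_sig (constructive_indefinite_description _ (HAres W)).
have HS W : exists Y, A (S W) Y /\ W = vadd (S W) (Psi Y).
  exact: (proj2_sig (constructive_indefinite_description _ (HAres W))).
exists S; split.
  move=> W X; split => [[Y [HA HW]]|->] //.
  have [Y' [HA' HW']] := HS W.
  by apply: (resolvent_unique _ _ _ _ HA HA'); rewrite -HW -HW'.
move=> a b; have [Ya [HAa Ha]] := HS a; have [Yb [HAb Hb]] := HS b.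
have := HAmono _ _ _ _ HAa HAb.
set d := vsub (S a) (S b).
have -> : vsub a b = vadd d (vsub (Psi Ya) (Psi Yb)).
  by rewrite Ha Hb /d; vext; ring.
rewrite /ipP (HPsym (vadd _ _)) (self_adjoint_add HPsym) (self_adjoint_sub HPsym).
by rewrite !(proj1 HPsi) dotDr; lra.
Qed.

Lemma preconditioned_max_monotone :
  max_monotoneP P (fun W U => exists Y, A W Y /\ U = Psi Y).
Proof.
split.
  move=> w u w' u' [Y [HA ->]] [Y' [HA' ->]].
  by rewrite ipP_Psi; apply: HAmono.
move=> w u Hmax.
have [X [Y [HA HW]]] := HAres (vadd w u).
have HwX : w = X.
  apply: strongly_positive_eq.
  have := Hmax X (Psi Y) (ex_intro _ Y (conj HA erefl)).
  have -> : vsub u (Psi Y) = vscale (-1) (vsub w X).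
    by vext; have := equal_f HW t; rewrite /vadd; lra.
  by rewrite ipP_scaler // /ipP; lra.
subst X; exists Y; split => //.
by vext; have := equal_f HW t; rewrite /vadd; lra.
Qed.

End Resolvent.
End StronglyPositiveMetric.

Section GameOperators.
Context {N M m : nat} {nd : 'I_N -> nat} {src dst : 'I_M -> 'I_N}.
Context {Am : forall i : 'I_N, 'I_m -> 'I_(nd i) -> R}.

Lemma dot_TW (u v : TW M m nd -> R) :
  dot u v = dot (Wl u) (Wl v) + dot (Wz u) (Wz v) + dot (Wx u) (Wx v).
Proof. by rewrite /dot !rsum_sum. Qed.

Lemma dot_Vz (l : TNm N m -> R) (z : TMm M m -> R) :
  dot l (Vz src dst z) = dot (VTl src dst l) z.
Proof.
rewrite /dot /Vz /VTl.
transitivity (rsum (fun r : 'I_m => rsum (fun i : 'I_N => rsum (fun e : 'I_M =>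
  l (i, r) * Vinc src dst i e * z (e, r))))).
  rewrite rsum_pair rsum_exchange; apply: eq_rsum => r; apply: eq_rsum => i /=.
  by rewrite -rsumZ; apply: eq_rsum => e; ring.
rewrite [in RHS]rsum_pair [in RHS]rsum_exchange; apply: eq_rsum => r.
rewrite rsum_exchange; apply: eq_rsum => e /=.
by rewrite rsumZr; apply: eq_rsum => i; ring.
Qed.

Lemma dot_RselT (x : TNn nd -> R) (y : Tn nd -> R) : dot x (RselT y) = dot (Rsel x) y.
Proof.
rewrite /dot /RselT /Rsel rsum_pair rsum_exchange; apply: eq_rsum => t /=.
rewrite -(rsum_pred1 (tag t) (fun i => x (i, t) * y t)).
by apply: eq_rsum => i; rewrite (fun_if (Rmult (x (i, t)))) Rmult_0_r.
Qed.

Lemma dot_Aop (l : TNm N m -> R) (y : Tn nd -> R) : dot l (Aop Am y) = dot (AopT Am l) y.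
Proof.
rewrite /dot /Aop rsum_pair [in RHS]rsum_sig; apply: eq_rsum => i /=; symmetry.
rewrite (eq_rsum _ (fun k => rsum (fun r => Am i r k * l (i, r) * y (existT _ i k))));
  last by move=> k; rewrite rsumZr.
rewrite rsum_exchange; apply: eq_rsum => r.
by rewrite -rsumZ; apply: eq_rsum => k; rewrite -Rmult_assoc (Rmult_comm (l (i, r))).
Qed.

Lemma RselK (y : Tn nd -> R) : Rsel (RselT y) = y.
Proof. by apply: functional_extensionality => t; rewrite /Rsel /RselT /= eqxx. Qed.

Lemma RselT_sub (y y' : Tn nd -> R) : RselT (vsub y y') = vsub (RselT y) (RselT y').
Proof. by vext; rewrite /RselT; case: ifP => _; ring. Qed.

Lemma Lx_sub (x x' : TNn nd -> R) : Lx src dst (vsub x x') = vsub (Lx src dst x) (Lx src dst x').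
Proof. by vext; rewrite /Lx -rsumB; apply: eq_rsum => j; rewrite /vsub; ring. Qed.

Lemma PhiApp_sym (sigma gamma tau : R) (u v : TW M m nd -> R) :
  dot u (PhiApp src dst Am sigma gamma tau v) = dot v (PhiApp src dst Am sigma gamma tau u).
Proof.
rewrite !dot_TW /PhiApp /Wl /Wz /Wx /mkW -/(Wl u) -/(Wz u) -/(Wx u) -/(Wl v) -/(Wz v) -/(Wx v).
rewrite !dotDr !dotZr !dot_Vz !dot_Aop !dot_RselT.
rewrite (dotC (VTl src dst (Wl u))) (dotC (VTl src dst (Wl v))).
rewrite (dotC (AopT Am (Wl u))) (dotC (AopT Am (Wl v))).
rewrite (dotC (Wl v) (Wl u)) (dotC (Wz v) (Wz u)) (dotC (Wx v) (Wx u)); ring.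
Qed.

End GameOperators.

Section GameMonotone.
Context {N M m : nat} {nd : 'I_N -> nat} {src dst : 'I_M -> 'I_N}.
Context {Om : forall i : 'I_N, ('I_(nd i) -> R) -> Prop}.
Context {Am : forall i : 'I_N, 'I_m -> 'I_(nd i) -> R}.

Lemma Wl_mkW l z x : Wl (mkW (M:=M) (m:=m) (nd:=nd) l z x) = l. Proof. by []. Qed.
Lemma Wz_mkW l z x : Wz (mkW (M:=M) (m:=m) (nd:=nd) l z x) = z. Proof. by []. Qed.
Lemma Wx_mkW l z x : Wx (mkW (M:=M) (m:=m) (nd:=nd) l z x) = x. Proof. by []. Qed.

Lemma dot_sub_mkW (u u' : TW M m nd -> R) l l' z z' x x' :
  dot (vsub u u') (vsub (mkW l z x) (mkW l' z' x')) =
  dot (vsub (Wl u) (Wl u')) (vsub l l') + dot (vsub (Wz u) (Wz u')) (vsub z z')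
  + dot (vsub (Wx u) (Wx u')) (vsub x x').
Proof. by rewrite dot_TW. Qed.

Lemma frakA_monotone (X Y X' Y' : TW M m nd -> R) :
  frakA src dst Om Am X Y -> frakA src dst Om Am X' Y' -> 0 <= dot (vsub X X') (vsub Y Y').
Proof.
move=> [v [[Hin Hv] ->]] [v' [[Hin' Hv'] ->]].
rewrite dot_sub_mkW; have := Hv _ Hin'; have := Hv' _ Hin.
rewrite !dotBl !dotBr !dotDr !dotZr !dot_RselT !dot_Vz !dot_Aop.
repeat match goal with |- context [dot (VTl ?a ?b ?c) ?d] => rewrite (dotC (VTl a b c) d) end.
repeat match goal with |- context [dot (AopT ?a ?c) ?d] => rewrite (dotC (AopT a c) d) end.
rewrite !(dotC v) !(dotC v'); lra.
Qed.

End GameMonotone.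

Lemma weighted_cauchy_schwarz (I : finType) (p x : I -> R) : (forall l, 0 <= p l) ->
  (rsum (fun l => p l * x l)) ^ 2 <= rsum p * rsum (fun l => p l * (x l * x l)).
Proof.
move=> Hp; have Hs := rsum_ge0 p Hp.
case: (Req_dec (rsum p) 0) => Hz.
  have H0 l : p l = 0 by have := rsum_ge_term p l Hp; have := Hp l; lra.
  rewrite (eq_rsum (fun l => p l * x l) (fun _ => 0)) ?rsum0 ?Hz; first lra.
  by move=> l; rewrite H0; ring.
set Sp := rsum p in Hs Hz *; set Sx := rsum (fun l => p l * x l).
set Sxx := rsum (fun l => p l * (x l * x l)); set mu := Sx / Sp.
(* the variance of x under the weights p is nonnegative *)
have H : 0 <= rsum (fun l => p l * ((x l - mu) * (x l - mu))).
  by apply: rsum_ge0 => l; apply: Rmult_le_pos; [exact: Hp | exact: Rle_0_sqr].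
rewrite (eq_rsum _ (fun l => p l * (x l * x l) + ((-2 * mu) * (p l * x l) + (mu * mu) * p l)))
  in H; last by move=> l; ring.
rewrite !rsumD !rsumZ -/Sxx -/Sx -/Sp in H.
have Hmu : mu * Sp = Sx by rewrite /mu; field.
nra.
Qed.

Lemma le_bigmax (I : finType) (F : I -> R) j : F j <= \big[Rmax/0]_(i : I) F i.
Proof.
have : j \in index_enum I by rewrite mem_index_enum.
elim: (index_enum I) => [//|a r IH].
rewrite in_cons big_cons => /orP [/eqP ->|Hj]; first exact: Rmax_l.
exact: Rle_trans (IH Hj) (Rmax_r _ _).
Qed.

Section Incidence.
Context {N M : nat} {src dst : 'I_M -> 'I_N}.
Hypothesis Hloopless : forall l, src l <> dst l.

Lemma Vinc_cube_mul i l a :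
  Vinc src dst i l * Vinc src dst i l * (Vinc src dst i l * a) = Vinc src dst i l * a.
Proof. by rewrite /Vinc; case: ifP => _; [ring | case: ifP => _; ring]. Qed.

Lemma Vinc_pow4_mul i l a :
  Vinc src dst i l * Vinc src dst i l * ((Vinc src dst i l * a) * (Vinc src dst i l * a))
  = Vinc src dst i l * Vinc src dst i l * (a * a).
Proof. by rewrite /Vinc; case: ifP => _; [ring | case: ifP => _; ring]. Qed.

Lemma Vinc_sqr_sum l : rsum (fun i => Vinc src dst i l * Vinc src dst i l) = 2.
Proof.
have Hsq i : Vinc src dst i l * Vinc src dst i l =
    (if dst l == i then 1 else 0) + (if src l == i then 1 else 0).
  rewrite /Vinc; case E1: (dst l == i); case E2: (src l == i); try ring.
  by case: (Hloopless l); rewrite (eqP E1) (eqP E2).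
rewrite (eq_rsum _ _ Hsq) rsumD.
by rewrite (rsum_pred1 (dst l) (fun _ => 1)) (rsum_pred1 (src l) (fun _ => 1)); ring.
Qed.

Lemma dstar_ge0 : 0 <= dstar src dst.
Proof.
rewrite /dstar; apply: (big_ind (fun x => 0 <= x)); first lra.
- by move=> x y Hx _; apply: Rle_trans Hx (Rmax_l _ _).
- by move=> i _; apply: rsum_ge0 => l; exact: Rle_0_sqr.
Qed.

Lemma incidence_sqr_bound (w : 'I_M -> R) :
  rsum (fun i => (rsum (fun l => Vinc src dst i l * w l)) ^ 2)
    <= 2 * dstar src dst * rsum (fun l => w l * w l).
Proof.
pose V i l := Vinc src dst i l.
have Hrow i : (rsum (fun l => V i l * w l)) ^ 2
    <= dstar src dst * rsum (fun l => V i l * V i l * (w l * w l)).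
  (* V^3 = V, so the row sum is a V^2-weighted sum of the V w and Cauchy-Schwarz applies *)
  have := weighted_cauchy_schwarz _ (fun l => V i l * V i l) (fun l => V i l * w l)
    (fun l => Rle_0_sqr _).
  rewrite (eq_rsum _ _ (fun l => Vinc_cube_mul i l (w l))).
  rewrite (eq_rsum _ _ (fun l => Vinc_pow4_mul i l (w l))).
  move/Rle_trans; apply; apply: Rmult_le_compat_r.
    by apply: rsum_ge0 => l; apply: Rmult_le_pos; exact: Rle_0_sqr.
  exact: (le_bigmax _ (fun i => Lap src dst i i) i).
apply: Rle_trans (ler_rsum _ _ Hrow) _.
rewrite (eq_rsum _ (fun i => rsum (fun l =>
   dstar src dst * (w l * w l) * (V i l * V i l)))); last first.
  by move=> i; rewrite -rsumZ; apply: eq_rsum => l; ring.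
rewrite rsum_exchange -rsumZ; apply: ler_rsum => l.
by rewrite rsumZ Vinc_sqr_sum; apply: Req_le; ring.
Qed.

End Incidence.

Section GameLaplacian.
Context {N M : nat} {nd : 'I_N -> nat}.
Variables (src dst : 'I_M -> 'I_N).
Hypothesis Hloopless : forall l, src l <> dst l.

Definition edge_diff (x : TNn nd -> R) (t : Tn nd) (l : 'I_M) : R :=
  rsum (fun j => Vinc src dst j l * x (j, t)).

Lemma Lx_edge_diff x i t : Lx src dst x (i, t) = rsum (fun l => Vinc src dst i l * edge_diff x t l).
Proof.
rewrite /Lx /Lap /edge_diff /=.
rewrite (eq_rsum _ (fun j => rsum (fun l => Vinc src dst i l * (Vinc src dst j l * x (j, t)))));
  last by move=> j; rewrite rsumZr; apply: eq_rsum => l; rewrite Rmult_assoc.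
by rewrite rsum_exchange; apply: eq_rsum => l; rewrite rsumZ.
Qed.

Lemma dot_Lx x :
  dot x (Lx src dst x) = rsum (fun t => rsum (fun l => edge_diff x t l * edge_diff x t l)).
Proof.
rewrite /dot rsum_pair rsum_exchange; apply: eq_rsum => t /=.
rewrite (eq_rsum _ (fun i => rsum (fun l => edge_diff x t l * (Vinc src dst i l * x (i, t)))));
  last by move=> i; rewrite Lx_edge_diff -rsumZ; apply: eq_rsum => l;
    set a := x _; set b := edge_diff _ _ _; ring.
by rewrite rsum_exchange; apply: eq_rsum => l; rewrite rsumZ.
Qed.

Lemma dot_Lx_ge0 (x : TNn nd -> R) : 0 <= dot x (Lx src dst x).
Proof. by rewrite dot_Lx; apply: rsum_ge0 => t; apply: rsum_ge0 => l; exact: Rle_0_sqr. Qed.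

Lemma dot_Lx_Lx (x : TNn nd -> R) :
  dot (Lx src dst x) (Lx src dst x) <= 2 * dstar src dst * dot x (Lx src dst x).
Proof.
rewrite dot_Lx -rsumZ /dot rsum_pair rsum_exchange; apply: ler_rsum => t /=.
apply: Rle_trans (incidence_sqr_bound Hloopless (edge_diff x t)).
by apply: Req_le; apply: eq_rsum => i; rewrite Lx_edge_diff /=; ring.
Qed.

End GameLaplacian.

Section GameCocoercive.
Context {N M m : nat} {nd : 'I_N -> nat} {src dst : 'I_M -> 'I_N}.
Context {Am : forall i : 'I_N, 'I_m -> 'I_(nd i) -> R} {bv : 'I_N -> 'I_m -> R}.
Context {gradf : forall i : 'I_N, (Tn nd -> R) -> ('I_(nd i) -> R)} {chi beta : R}.
Hypothesis Hloopless : forall l, src l <> dst l.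
Hypothesis HA4 : forall x x' : TNn nd -> R,
  chi * (vnorm (vsub (Fvec gradf x) (Fvec gradf x'))) ^ 2
    <= dot (vsub x x') (vsub (RselT (Fvec gradf x)) (RselT (Fvec gradf x'))).
Hypothesis Hbeta : 0 < beta.
Hypothesis Hbeta_chi : 2 * beta < chi.
Hypothesis Hbeta_dstar : 4 * beta * dstar src dst < 1.

(* Only the x-block of bar B varies; with a = R^T (F x - F x') and b = L (x - x'),
   the claim reduces to beta |a + b|^2 <= <x - x', a> + <x - x', b>, where Assumption 4 gives
   chi |a|^2 <= <x - x', a> and the Laplacian gives |b|^2 <= 2 d* <x - x', b>. *)
Lemma frakB_cocoercive (W W' : TW M m nd -> R) :
  let B := frakB src dst Am bv gradf in
  beta * dot (vsub (B W) (B W')) (vsub (B W) (B W')) <= dot (vsub W W') (vsub (B W) (B W')).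
Proof.
move=> B; rewrite {}/B.
set x := Wx W; set x' := Wx W'; set dF := vsub (Fvec gradf x) (Fvec gradf x').
set D := vsub x x'; set a := RselT dF; set b := Lx src dst D.
have -> : vsub (frakB src dst Am bv gradf W) (frakB src dst Am bv gradf W')
          = mkW vzero vzero (vadd a b).
  by rewrite /frakB /a /b /dF /D /x /x' RselT_sub Lx_sub; vext; case: t => [[t|t]|t] /=; ring.
rewrite !dot_TW !Wl_mkW !Wz_mkW !Wx_mkW !dot0r.
change (Wx (vsub W W')) with D.
have H4 := HA4 x x'; rewrite -/dF -RselT_sub -/a -/D /vnorm pow2_sqrt in H4; last exact: dot_ge0.
have Haa : dot a a = dot dF dF by rewrite /a dot_RselT RselK.
have Hab := dot_ge0 (vsub a b); rewrite dot_sub_sqr in Hab.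
have HQ : 0 <= dot D b by apply: dot_Lx_ge0.
have Hbb : dot b b <= 2 * dstar src dst * dot D b by apply: dot_Lx_Lx.
have Hd : 0 <= dstar src dst by apply: dstar_ge0.
rewrite (dotDl a b (vadd a b)) !dotDr (dotC b a).
have P1 : 0 <= beta * (dot a a - 2 * dot a b + dot b b) by apply: Rmult_le_pos; lra.
have P2 : beta * dot b b <= beta * (2 * dstar src dst * dot D b).
  by apply: Rmult_le_compat_l; lra.
have P3 : 0 <= (chi - 2 * beta) * dot dF dF by apply: Rmult_le_pos; [lra | exact: dot_ge0].
have P4 : 0 <= (1 - 4 * beta * dstar src dst) * dot D b by apply: Rmult_le_pos; lra.
rewrite Haa in P1 *; nra.
Qed.

End GameCocoercive.

Section GameResolvent.
Context {N M m : nat} {nd : 'I_N -> nat} {src dst : 'I_M -> 'I_N}.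
Context {Om : forall i : 'I_N, ('I_(nd i) -> R) -> Prop}.
Context {Am : forall i : 'I_N, 'I_m -> 'I_(nd i) -> R}.

Lemma dot_blk_le (u : Tn nd -> R) (i : 'I_N) : dot (blk u i) (blk u i) <= dot u u.
Proof.
rewrite [in X in _ <= X]/dot rsum_sig.
apply: (rsum_ge_term (fun j => rsum (fun k : 'I_(nd j) => u (existT _ j k) * u (existT _ j k))) i).
by move=> j; apply: rsum_ge0 => k; exact: Rle_0_sqr.
Qed.

Lemma OmegaP_closed : (forall i, closed_vset (Om i)) -> closed_vset (OmegaP Om).
Proof.
move=> Hc x /not_all_ex_not [i /(Hc i) [eps [Heps Hball]]].
exists eps; split => // y Hy Hyin.
apply: (Hball (blk y i)) (Hyin i).
apply: Rle_lt_trans Hy; apply: sqrt_le_1_alt; exact: (dot_blk_le (vsub y x) i).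
Qed.

Lemma OmegaP_convex : (forall i, convex_vset (Om i)) -> convex_vset (OmegaP Om).
Proof. by move=> Hc x y t Hx Hy Ht i; exact: (Hc i _ _ t (Hx i) (Hy i) Ht). Qed.

Lemma OmegaP_nonempty : (forall i, has_nonempty_interior (Om i)) -> exists y, OmegaP Om y.
Proof.
move=> Hint.
have Hne i : exists x, Om i x.
  have [x [eps [Heps Hball]]] := Hint i; exists x; apply: Hball.
  have -> : vsub x x = vzero by vext; ring.
  by rewrite /vnorm dot0r sqrt_0.
pose pick i := proj1_sig (constructive_indefinite_description _ (Hne i)).
exists (fun t : Tn nd => let: existT i k := t in pick i k) => i.
exact: (proj2_sig (constructive_indefinite_description _ (Hne i))).
Qed.

Context {sigma gamma tau : R}.
Hypotheses (Hsigma : 0 < sigma) (Hgamma : 0 < gamma) (Htau : 0 < tau).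
Hypothesis HOm_closed : forall i, closed_vset (Om i).
Hypothesis HOm_convex : forall i, convex_vset (Om i).
Hypothesis HOm_int : forall i, has_nonempty_interior (Om i).

Local Notation Phi := (PhiApp src dst Am sigma gamma tau).

(* Solving W = X + Phi^-1 Y with Y in bar A(X) block by block: the lambda- and z-blocks are
   explicit, and the x-block is the projection onto Omega of a point computed from Phi W. *)
Lemma frakA_resolvent_exists {Psi : (TW M m nd -> R) -> (TW M m nd -> R)} :
  is_inverse Phi Psi ->
  forall W, exists X Y, frakA src dst Om Am X Y /\ W = vadd X (Psi Y).
Proof.
move=> [HPsi HPsiK] W.
have [c Hc] : exists c, c = Phi W by exists (Phi W).
set lam := vscale sigma (Wl c).
set z := vscale gamma (vsub (Wz c) (vscale 2 (VTl src dst lam))).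
set g := vsub (Wx c) (vscale 2 (RselT (AopT Am lam))).
have [y [Hy Hproj]] := quad_min_vi (fun u : Tn nd -> R => u) (vscale tau (Rsel g)) 1 Rlt_0_1
  (@dotC _) (fun u => Req_le _ _ (Rmult_1_l _)) (OmegaP Om)
  (OmegaP_closed HOm_closed) (OmegaP_convex HOm_convex) (OmegaP_nonempty HOm_int).
set v := vscale (/ tau) (vsub (vscale tau (Rsel g)) y).
set x := vscale tau (vsub g (RselT v)).
have HRx : Rsel x = y.
  by apply: functional_extensionality => t; rewrite /x /v /Rsel /vscale /vsub /RselT /= eqxx;
    field; lra.
exists (mkW lam z x), (vsub c (Phi (mkW lam z x))); split.
  exists v; split.
    rewrite Wx_mkW HRx; split => // y' Hy'.
    have := Hproj y' Hy'; rewrite /v dotZl !dotBl.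
    have : 0 < / tau by apply: Rinv_0_lt_compat.
    nra.
  rewrite Wz_mkW Wx_mkW Wl_mkW HRx.
  apply: functional_extensionality => -[[t|t]|t];
    rewrite /PhiApp Wl_mkW Wz_mkW Wx_mkW HRx /mkW /vsub /vadd /vscale /=.
  - rewrite /lam /vscale /Wl -Rmult_assoc Rinv_l; last lra.
    by set a0 := c _; ring.
  - by rewrite /z /lam /vscale /vsub /Wz; set a0 := c _; set a1 := VTl _ _ _ _; field; lra.
  - by rewrite /x /g /vscale /vsub /Wx; set a0 := c _; field; lra.
rewrite -(HPsiK W) -(HPsiK (vadd _ _)); congr Psi.
have HPsym := PhiApp_sym (src := src) (dst := dst) (Am := Am) sigma gamma tau.
by rewrite (self_adjoint_add HPsym) HPsi -Hc; vext; ring.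
Qed.

End GameResolvent.

Theorem lemma4 (N M m : nat) (nd : 'I_N -> nat) (src dst : 'I_M -> 'I_N)
  (Om : forall i : 'I_N, ('I_(nd i) -> R) -> Prop)
  (Am : forall i : 'I_N, 'I_m -> 'I_(nd i) -> R) (bv : 'I_N -> 'I_m -> R)
  (f : 'I_N -> (Tn nd -> R) -> R)
  (gradf : forall i : 'I_N, (Tn nd -> R) -> ('I_(nd i) -> R))
  (chi betaE delta sigma gamma tau : R)
  (* the communication graph *)
  (Hgraph : connected_simple_graph src dst)
  (* Assumption 1 *)
  (HOm_closed : forall i, closed_vset (Om i))
  (HOm_convex : forall i, convex_vset (Om i))
  (HOm_int : forall i, has_nonempty_interior (Om i))
  (HX_ri : nonempty_rel_interior (Xset Om Am bv))
  (HXi_ri : forall (i : 'I_N) (x : Tn nd -> R), Xset Om Am bv x ->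
     nonempty_rel_interior (fun u => Om i u /\ Xset Om Am bv (upd x i u)))
  (Hf_convex : forall (i : 'I_N) (x : Tn nd -> R) (u v : 'I_(nd i) -> R) (t : R),
     0 <= t <= 1 ->
     f i (upd x i (vadd (vscale t u) (vscale (1 - t) v)))
       <= t * f i (upd x i u) + (1 - t) * f i (upd x i v))
  (* f_i is C^1 in x_i, with partial gradient gradf i *)
  (Hgrad : forall (i : 'I_N) (x : Tn nd -> R) (eps : R), 0 < eps ->
     exists del, 0 < del /\ forall h : 'I_(nd i) -> R, vnorm h < del ->
       Rabs (f i (upd x i (vadd (blk x i) h)) - f i x - dot (gradf i x) h)
         <= eps * vnorm h)
  (Hgrad_cont : forall (i : 'I_N) (x : Tn nd -> R) (eps : R), 0 < eps ->
     exists del, 0 < del /\ forall u : 'I_(nd i) -> R,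
       vnorm (vsub u (blk x i)) < del ->
       vnorm (vsub (gradf i (upd x i u)) (gradf i x)) < eps)
  (* Assumption 4 *)
  (Hchi : 0 < chi)
  (HA4 : forall x x' : TNn nd -> R,
     chi * (vnorm (vsub (Fvec gradf x) (Fvec gradf x'))) ^ 2
       <= dot (vsub x x') (vsub (RselT (Fvec gradf x)) (RselT (Fvec gradf x'))))
  (* step sizes: betaE in (0, 1/2 min{chi, 1/(2 dstar)}), delta > 1/(2 betaE) *)
  (HbetaE : 0 < betaE) (HbetaE1 : 2 * betaE < chi)
  (HbetaE2 : 4 * betaE * dstar src dst < 1)
  (Hdelta : / (2 * betaE) < delta)
  (Hsigma : 0 < sigma) (Hgamma : 0 < gamma) (Htau : 0 < tau)
  (* bar Phi - delta I is positive semidefinite *)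
  (HPSD : forall W : TW M m nd -> R,
     0 <= dot W (PhiApp src dst Am sigma gamma tau W) - delta * dot W W) :
  let Phi := PhiApp src dst Am sigma gamma tau in
  let A := frakA src dst Om Am in
  let B := frakB src dst Am bv gradf in
  (exists Psi, is_inverse Phi Psi) /\
  forall Psi, is_inverse Phi Psi ->
    (* (i) *)
    max_monotoneP Phi (fun W U => exists Y, A W Y /\ U = Psi Y) /\
    (exists T1 : (TW M m nd -> R) -> (TW M m nd -> R),
       (* T1 = (Id + Phi^-1 A)^-1 is single-valued, everywhere defined *)
       (forall W P, (exists Y, A P Y /\ W = vadd P (Psi Y)) <-> P = T1 W) /\
       averagedP Phi (/ 2) T1 /\
       (* (iii) T = T1 o T2 *)
       averagedP Phi (2 * delta * betaE / (4 * delta * betaE - 1))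
         (fun W => T1 (vsub W (Psi (B W))))) /\
    (* (ii) *)
    cocoerciveP Phi (delta * betaE) (fun W => Psi (B W)) /\
    averagedP Phi (/ (2 * delta * betaE)) (fun W => vsub W (Psi (B W))).
Proof.
move=> Phi A B.
have Hloopless : forall l, src l <> dst l by case: Hgraph => _ [].
have HdbetaE : / 2 < delta * betaE.
  have H2b : 0 < 2 * betaE by lra.
  by have := Rmult_lt_compat_l _ _ _ H2b Hdelta; rewrite Rinv_r; lra.
have Hdelta0 : 0 < delta by nra.
have HPsym : forall u v, dot u (Phi v) = dot v (Phi u) := PhiApp_sym sigma gamma tau.
have HPstrong W : delta * dot W W <= dot W (Phi W) by have := HPSD W; rewrite /Phi; lra.
have HPpos := strongly_positive_ge0 Hdelta0 HPstrong.
split; first exact: strongly_positive_invertible Hdelta0 HPsym HPstrong.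
move=> Psi HPsi.
have HAmono : forall X Y X' Y', A X Y -> A X' Y' -> 0 <= dot (vsub X X') (vsub Y Y').
  exact: frakA_monotone.
have HAres := frakA_resolvent_exists Hsigma Hgamma Htau HOm_closed HOm_convex HOm_int HPsi.
have Hcoco : cocoerciveP Phi (delta * betaE) (fun W => Psi (B W)).
  exact: (preconditioned_cocoercive Hdelta0 HPsym HPstrong HPsi HbetaE
    (frakB_cocoercive Hloopless HA4 HbetaE HbetaE1 HbetaE2)).
have [T1 [HT1 Hfirm]] := exists_resolvent Hdelta0 HPsym HPstrong HPsi HAmono HAres.
split; first exact (preconditioned_max_monotone Hdelta0 HPsym HPstrong HPsi HAmono HAres).
rewrite (Rmult_assoc 2) (Rmult_assoc 4); split; last split => //.
  exists T1; do 2 (split => //).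
  - exact (firmly_nonexpansive_averaged HPsym HPpos Hfirm).
  - exact (comp_averaged HPsym HPpos HdbetaE Hcoco Hfirm).
exact (cocoercive_sub_averaged HPsym HPpos HdbetaE Hcoco).
Qed.
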